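(* There is no sequence of maps $\varphi_0,\varphi_1,\varphi_2,\ldots$, each defined on the ideal $\mathcal{M}$ of meager subsets of $\mathbb{R}$ and taking values in the family of closed nowhere dense subsets of $\mathbb{R}$, such that both of the following hold: (a) $A\subseteq\bigcup_{i<\omega}\varphi_i(A)$ for every meager $A\subseteq\mathbb{R}$; (b) $\varphi_i(A)\subseteq\varphi_i(B)$ for all meager $A\subseteq B$ and all $i<\omega$. *)

From Stdlib Require Import Reals.
Open Scope R_scope.

Definition subset (A B : R -> Prop) : Prop := forall x, A x -> B x.

Definition is_open (U : R -> Prop) : Prop :=
  forall x, U x -> exists eps, 0 < eps /\ forall y, Rabs (y - x) < eps -> U y.

Definition is_closed (F : R -> Prop) : Prop := is_open (fun x => ~ F x).

Definition closure (A : R -> Prop) : R -> Prop :=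
  fun x => forall eps, 0 < eps -> exists y, A y /\ Rabs (y - x) < eps.

Definition nowhere_dense (A : R -> Prop) : Prop :=
  forall U, is_open U -> subset U (closure A) -> forall x, ~ U x.

Definition meager (A : R -> Prop) : Prop :=
  exists N : nat -> (R -> Prop),
    (forall n, nowhere_dense (N n)) /\ forall x, A x -> exists n, N n x.

From Stdlib Require Import Reals.
From Stdlib Require Import Lra Lia Classical ClassicalEpsilon Cantor.
Open Scope R_scope.

(* Let X_i be the set of points y with y in phi_i({y}).  Each X_i is
   separable, so it contains a countable set D_i dense in X_i.  The union A of
   all D_i is countable, hence meager.  By monotonicity D_i is contained in
   phi_i(A), and since phi_i(A) is closed, the whole of X_i is contained in
   phi_i(A).  By the Baire category theorem the closed nowhere dense sets
   phi_i(A) do not cover R; take x outside all of them.  Applied to the meager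
   set {x}, the covering property gives some i with x in phi_i({x}), i.e.
   x in X_i, so x in phi_i(A): a contradiction. *)

Definition point (x : R) : R -> Prop := fun y => y = x.

Lemma eq_of_close (x z : R) :
  (forall eps, 0 < eps -> Rabs (x - z) < eps) -> x = z.
Proof.
  intros Hclose. destruct (Req_dec x z) as [|Hne]; [assumption|].
  assert (Hpos : 0 < Rabs (x - z)) by (apply Rabs_pos_lt; lra).
  specialize (Hclose _ Hpos). lra.
Qed.

(* A single point is nowhere dense: a ball inside the closure of {x} would
   contain two distinct points both equal to x. *)
Lemma point_nowhere_dense (x : R) : nowhere_dense (point x).
Proof.
  intros U HU Hsub y Uy.
  destruct (HU y Uy) as [e [He Hball]].
  assert (Hx : forall z, Rabs (z - y) < e -> x = z).
  { intros z Hz. apply eq_of_close. intros eps Heps.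
    destruct (Hsub z (Hball z Hz) eps Heps) as [w [-> Hw]]. exact Hw. }
  assert (H1 : x = y) by (apply Hx; rewrite Rminus_diag, Rabs_R0; lra).
  assert (H2 : x = y + e / 2).
  { apply Hx. replace (y + e / 2 - y) with (e / 2) by ring.
    rewrite Rabs_right; lra. }
  lra.
Qed.

Lemma countable_meager (f : nat -> R) (A : R -> Prop) :
  subset A (fun y => exists n, y = f n) -> meager A.
Proof.
  intros HA. exists (fun n => point (f n)). split.
  - intros n. apply point_nowhere_dense.
  - intros x Hx. exact (HA x Hx).
Qed.

Lemma point_meager (x : R) : meager (point x).
Proof.
  apply (countable_meager (fun _ => x)). intros y Hy. exists 0%nat. exact Hy.
Qed.

Lemma open_interval_open (a b : R) : is_open (fun z => a < z < b).
Proof.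
  intros x Hx. exists (Rmin (x - a) (b - x)). split.
  - apply Rmin_glb_lt; lra.
  - intros y Hy. apply Rabs_def2 in Hy.
    pose proof (Rmin_l (x - a) (b - x)). pose proof (Rmin_r (x - a) (b - x)).
    lra.
Qed.

(* Every nonempty open interval contains a nondegenerate closed subinterval
   disjoint from a given nowhere dense set: otherwise the open interval would
   lie inside the closure of that set. *)
Lemma avoid_nowhere_dense (G : R -> Prop) : nowhere_dense G ->
  forall a b, a < b -> exists a' b',
    a < a' /\ a' < b' /\ b' < b /\ forall z, a' <= z <= b' -> ~ G z.
Proof.
  intros HG a b Hab. apply NNPP. intro Hno.
  apply (HG (fun z => a < z < b) (open_interval_open a b)) with ((a + b) / 2);
    [|lra].
  intros z Hz eps Heps. apply NNPP. intro Hfar. apply Hno.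
  set (m := Rmin eps (Rmin (z - a) (b - z))).
  assert (Hm1 : m <= eps) by apply Rmin_l.
  assert (Hm2 : m <= Rmin (z - a) (b - z)) by apply Rmin_r.
  pose proof (Rmin_l (z - a) (b - z)). pose proof (Rmin_r (z - a) (b - z)).
  assert (Hm : 0 < m).
  { apply Rmin_glb_lt; [lra|]. apply Rmin_glb_lt; lra. }
  exists (z - m / 2), (z + m / 2). repeat split; try lra.
  intros w Hw Gw. apply Hfar. exists w. split; [exact Gw|].
  apply Rabs_def1; lra.
Qed.

Lemma nested_intervals (a b : nat -> R) :
  (forall n, a n <= b n) ->
  (forall n, a n <= a (S n) /\ b (S n) <= b n) ->
  exists x, forall n, a n <= x <= b n.
Proof.
  intros Hab Hnest.
  assert (Ha : forall n m, (n <= m)%nat -> a n <= a m).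
  { intros n m Hnm. induction Hnm; [lra|]. pose proof (Hnest m). lra. }
  assert (Hb : forall n m, (n <= m)%nat -> b m <= b n).
  { intros n m Hnm. induction Hnm; [lra|]. pose proof (Hnest m). lra. }
  assert (Hlow : forall n m, a n <= b m).
  { intros n m. pose proof (Ha n (max n m) (Nat.le_max_l _ _)).
    pose proof (Hb m (max n m) (Nat.le_max_r _ _)).
    pose proof (Hab (max n m)). lra. }
  destruct (completeness (fun r => exists n, r = a n)) as [x [Hub Hlub]].
  - exists (b 0%nat). intros r [n ->]. apply Hlow.
  - exists (a 0%nat), 0%nat. reflexivity.
  - exists x. intros n. split.
    + apply Hub. exists n. reflexivity.
    + apply Hlub. intros r [k ->]. apply Hlow.
Qed.

(* Starting from [0,1], shrink the interval at step n so that it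
   avoids F n; a common point of all intervals avoids every F n. *)
Theorem baire (F : nat -> R -> Prop) :
  (forall n, nowhere_dense (F n)) -> exists x, forall n, ~ F n x.
Proof.
  intros HF.
  pose (good := fun n (p q : R * R) =>
    fst p < fst q /\ fst q < snd q /\ snd q < snd p /\
    forall z, fst q <= z <= snd q -> ~ F n z).
  pose (shrink := fun n p => epsilon (inhabits (0, 0)) (good n p)).
  assert (Hshrink : forall n p, fst p < snd p -> good n p (shrink n p)).
  { intros n p Hp. apply epsilon_spec.
    destruct (avoid_nowhere_dense _ (HF n) _ _ Hp) as [a' [b' H]].
    exists (a', b'). exact H. }
  pose (s := fix s n :=
    match n with 0%nat => shrink 0%nat (0, 1) | S m => shrink (S m) (s m) end).
  assert (Hs : forall n,
    good n (match n with 0%nat => (0, 1) | S m => s m end) (s n)).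
  { induction n as [|n IH].
    - apply Hshrink. simpl. lra.
    - apply Hshrink. destruct IH as [_ [Hlt _]]. exact Hlt. }
  destruct (nested_intervals (fun n => fst (s n)) (fun n => snd (s n)))
    as [x Hx].
  - intros n. destruct (Hs n) as [_ [Hlt _]]. lra.
  - intros n. destruct (Hs (S n)) as [Hl [_ [Hr _]]].
    split; apply Rlt_le; [exact Hl | exact Hr].
  - exists x. intros n. destruct (Hs n) as [_ [_ [_ Havoid]]]. exact (Havoid x (Hx n)).
Qed.

Lemma grid_ball (x e : R) : 0 < e -> exists (N : nat) (k : Z),
  Rabs (x - IZR k / INR N) < / INR N /\
  forall z, Rabs (z - IZR k / INR N) < / INR N -> Rabs (z - x) < e.
Proof.
  intros He. destruct (archimed_cor1 (e / 2)) as [N [HN HN0]]; [lra|].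
  assert (HNpos : 0 < INR N) by (apply lt_0_INR; exact HN0).
  assert (HinvN : 0 < / INR N) by (apply Rinv_0_lt_compat; exact HNpos).
  exists N, (up (x * INR N) - 1)%Z.
  destruct (archimed (x * INR N)) as [Hup1 Hup2].
  rewrite minus_IZR.
  set (u := IZR (up (x * INR N))) in *.
  assert (Hcenter : (u - 1) / INR N = x + (u - 1 - x * INR N) * / INR N)
    by (field; lra).
  assert (Hdist : Rabs ((u - 1 - x * INR N) * / INR N) < / INR N).
  { rewrite Rabs_mult, (Rabs_right (/ INR N)); [|lra].
    rewrite <- (Rmult_1_l (/ INR N)) at 2. apply Rmult_lt_compat_r; [lra|].
    apply Rabs_def1; lra. }
  rewrite Hcenter. split.
  - replace (x - (x + (u - 1 - x * INR N) * / INR N))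
      with (- ((u - 1 - x * INR N) * / INR N)) by ring.
    rewrite Rabs_Ropp. exact Hdist.
  - intros z Hz. apply Rabs_def2 in Hz. apply Rabs_def2 in Hdist.
    apply Rabs_def1; lra.
Qed.

Definition grid (n : nat) : nat * Z :=
  let (N, m) := Cantor.of_nat n in
  let (p, q) := Cantor.of_nat m in (N, (Z.of_nat p - Z.of_nat q)%Z).

Lemma grid_surjective (N : nat) (k : Z) : exists n, grid n = (N, k).
Proof.
  exists (Cantor.to_nat (N, Cantor.to_nat (Z.to_nat k, Z.to_nat (- k)))).
  unfold grid. rewrite !Cantor.cancel_of_to. f_equal. lia.
Qed.

(* The n-th term picks a point of X in the n-th grid ball, if there is one. *)
Definition dense_seq (X : R -> Prop) (n : nat) : R :=
  let (N, k) := grid n in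
  epsilon (inhabits 0) (fun y => X y /\ Rabs (y - IZR k / INR N) < / INR N).

Lemma dense_seq_dense (X : R -> Prop) :
  subset X (closure (fun y => exists n, y = dense_seq X n /\ X y)).
Proof.
  intros x Hx eps Heps.
  destruct (grid_ball x eps Heps) as [N [k [Hxk Hball]]].
  destruct (grid_surjective N k) as [n Hn].
  assert (Hpick : X (dense_seq X n) /\
                  Rabs (dense_seq X n - IZR k / INR N) < / INR N).
  { unfold dense_seq. rewrite Hn. apply epsilon_spec. exists x. now split. }
  destruct Hpick as [HXn Hnk].
  exists (dense_seq X n). split.
  - exists n. now split.
  - exact (Hball _ Hnk).
Qed.

Lemma closed_closure (F D : R -> Prop) :
  is_closed F -> subset D F -> subset (closure D) F.
Proof.
  intros HF HD x Hx. apply NNPP. intro Hnot.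
  destruct (HF x Hnot) as [e [He Hball]].
  destruct (Hx e He) as [y [Dy Hy]].
  exact (Hball y Hy (HD y Dy)).
Qed.

Theorem mainTheorem2 :
  ~ exists phi : nat -> (R -> Prop) -> (R -> Prop),
      (forall i A, meager A -> is_closed (phi i A) /\ nowhere_dense (phi i A)) /\
      (forall A, meager A -> forall x, A x -> exists i, phi i A x) /\
      (forall i A B, meager A -> meager B -> subset A B ->
                     subset (phi i A) (phi i B)).
Proof.
  intros [phi [Hclosed [Hcover Hmono]]].
  pose (X := fun i y => phi i (point y) y).
  pose (D := fun i => dense_seq (X i)).
  pose (A := fun y => exists i n, y = D i n).
  assert (HA : meager A).
  { apply (countable_meager (fun m => let (i, n) := Cantor.of_nat m in D i n)).
    intros y [i [n ->]]. exists (Cantor.to_nat (i, n)).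
    now rewrite Cantor.cancel_of_to. }
  assert (HXA : forall i, subset (X i) (phi i A)).
  { intros i x Hx.
    apply (closed_closure (phi i A) (fun y => exists n, y = D i n /\ X i y)
             (proj1 (Hclosed i A HA))).
    - intros y [n [-> Hy]].
      apply (Hmono i (point (D i n)) A (point_meager _) HA); [|exact Hy].
      intros z ->. exists i, n. reflexivity.
    - exact (dense_seq_dense (X i) x Hx). }
  destruct (baire (fun i => phi i A)) as [x Hx].
  { intros i. exact (proj2 (Hclosed i A HA)). }
  destruct (Hcover (point x) (point_meager x) x eq_refl) as [i Hi].
  exact (Hx i (HXA i x Hi)).
Qed.
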